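(* Let $\mathcal{S}$ be a finite elation generalized quadrangle of order $(s,t)$ with elation group $G$ and associated $4$-gonal family $(G,\{A_i\}_{i=0}^t,\{A_i^*\}_{i=0}^t)$. In $\mathbb{R}[G]$ put $S:=\sum_{i=0}^t(sA_i+A_i^* )$ and $T:=\sum_{i=0}^t(tA_i-A_i^* )$. Let $\chi$ be a nonlinear irreducible complex character of $G$, extended linearly to $\mathbb{R}[G]$. Then \[\chi(S)=s(s+t)\,\omega_\chi,\qquad \chi(T)=\frac{(s+t)st}{\gcd(s,t)}\,z_\chi\] for some nonnegative integers $\omega_\chi, z_\chi$.
   Context: A generalized quadrangle of order $(s,t)$: each line has $s+1$ points, each point is on $t+1$ lines, and for each non-incident point-line pair $(P,\ell)$ there is a unique point on $\ell$ collinear with $P$. An elation about $P$ is an automorphism that is the identity or fixes each line through $P$ and no point not collinear with $P$. $\mathcal{S}$ is an elation generalized quadrangle with base point $P$ and elation group $G$ if $G$ consists of elations about $P$ and acts regularly on the points not collinear with $P$. The associated $4$-gonal family: fix a point $y$ not collinear with $P$, let $M_0,\dots,M_t$ be the lines through $y$, let $z_i$ be the unique point of $M_i$ collinear with $P$, and let $A_i$, $A_i^*$ be the stabilizers in $G$ of $M_i$ and $z_i$ respectively. In $\mathbb{R}[G]$ a subset is identified with the sum of its elements. *)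

From mathcomp Require Import all_boot all_order all_algebra all_fingroup all_solvable all_field all_character.
Set Implicit Arguments. Unset Strict Implicit. Unset Printing Implicit Defensive.
Import GRing.Theory Num.Theory.

Section GQ.
Variable T : finType.
Implicit Types (L : {set {set T}}) (x y p : T) (l : {set T}).

(* x and y are collinear (x = y allowed, as usual: x ~ y) *)
Definition collinear L x y : bool := [exists l in L, (x \in l) && (y \in l)].

Definition GQ L (s t : nat) : Prop :=
  [/\ 0 < s, 0 < t,
      forall l, l \in L -> #|l| = s.+1,
      forall x, #|[set l in L | x \in l]| = t.+1 &
      forall x l, l \in L -> x \notin l ->
        #|[set z in l | collinear L x z]| = 1].

Definition is_aut L (g : {perm T}) : bool :=
  [forall l : {set T}, (l \in L) == ((fun x => g x) @: l \in L)].

Definition elation L p (g : {perm T}) : bool :=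
  (g == 1%g) ||
  [&& is_aut L g,
      [forall l in L, (p \in l) ==> ((fun x => g x) @: l == l)] &
      [forall x, ~~ collinear L p x ==> (g x != x)]].

Definition EGQ L p (G : {group {perm T}}) : Prop :=
  (forall g, g \in G -> elation L p g) /\
  (forall x z, ~~ collinear L p x -> ~~ collinear L p z ->
     exists! g, g \in G /\ g x = z).

(* for a line M through y, the unique point of M collinear with p *)
Definition zpt L p l : T := odflt p [pick z in l | collinear L p z].

(* A_M : stabilizer of the line M in G ; A_M^* : stabilizer of z_M in G *)
Definition stab_line (G : {group {perm T}}) l : {set {perm T}} :=
  [set g in G | (fun x => g x) @: l == l].
Definition stab_pt (G : {group {perm T}}) z : {set {perm T}} :=
  [set g in G | g z == z].

End GQ.

Local Open Scope ring_scope.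
Definition chi_S (T : finType) (L : {set {set T}}) (s : nat) (p y : T)
  (G : {group {perm T}}) (chi : 'CF(G)) : algC :=
  \sum_(M in L | y \in M)
     (s%:R * \sum_(a in stab_line G M) chi a
      + \sum_(a in stab_pt G (zpt L p M)) chi a).

Definition chi_T (T : finType) (L : {set {set T}}) (t : nat) (p y : T)
  (G : {group {perm T}}) (chi : 'CF(G)) : algC :=
  \sum_(M in L | y \in M)
     (t%:R * \sum_(a in stab_line G M) chi a
      - \sum_(a in stab_pt G (zpt L p M)) chi a).

From mathcomp Require Import all_boot all_order all_algebra all_fingroup all_solvable all_field all_character.
From mathcomp Require Import ring zify.
Set Implicit Arguments. Unset Strict Implicit. Unset Printing Implicit Defensive.
Import GRing.Theory Num.Theory.

(* Let X and Y be the sums, in the group ring of G, of the stabilizers A_M and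
   A*_M = G_(z_M) over the t + 1 lines M through y.  Counting the lines through
   pairs of points gives X^2 + Y = (s + t) X + (t + 1) G, while A_M^2 = s A_M,
   A*_M^2 = s t A*_M, A_M A*_M = A*_M A_M = s A*_M and A_N A*_M = A*_M A_N = G
   for M <> N.  In a representation affording a nontrivial irreducible character
   chi, G acts as 0; then E = Y / (s t) is idempotent and P = X - s E satisfies
   P^2 = (s + t) P.  Traces of idempotents are ranks, so chi(X) = s rk E +
   (s + t) rk(P / (s + t)) and chi(Y) = s t rk E, which gives chi(S) and chi(T).
   Finally chi(X) = s (sum_M rk(A_M / s)) shows that s divides t rk(P / (s + t)),
   which is therefore a multiple of lcm(s, t). *)

Section ScaledIdempotents.
Local Open Scope ring_scope.
Variables (F : numFieldType) (n : nat).
Implicit Types (A X Y : 'M[F]_n) (c : F).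

Lemma mxtrace_idem A : A *m A = A -> \tr A = (\rank A)%:R.
Proof.
move=> AA; have AE := mulmx_base A.
have base_inj : col_base A *m (row_base A *m col_base A) = col_base A *m 1%:M.
  apply: (row_free_inj (row_base_free A)).
  by rewrite mulmx1 mulmxA AE -mulmxA AE AA.
have idE := row_full_inj (col_base_full A) base_inj.
by rewrite -{1}AE mxtrace_mulC idE mxtrace1.
Qed.

Lemma mxtrace_scaled_idem A c : c != 0 -> A *m A = c *: A ->
  \tr A = c * (\rank A)%:R.
Proof.
move=> c0 AA; rewrite -(mxrank_scale_nz A (invr_neq0 c0)) -mxtrace_idem.
  by rewrite mxtraceZ mulrA divff // mul1r.
by rewrite -scalemxAl -scalemxAr AA !scalerA mulfVK.
Qed.

(* Y / (s t) is idempotent and P := X - Y / t satisfies P^2 = (s + t) P. *)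
Lemma mxtrace_quadratic_system (s t : nat) X Y : (0 < s)%N -> (0 < t)%N ->
  X *m Y = s%:R *: Y -> Y *m X = s%:R *: Y -> Y *m Y = (s * t)%:R *: Y ->
  X *m X = (s + t)%:R *: X - Y ->
  exists rF rP : nat,
    \tr X = (s * rF + (s + t) * rP)%:R /\ \tr Y = (s * t * rF)%:R.
Proof.
move=> s_gt0 t_gt0 XY YX YY XX.
have t0 : (t%:R : F) != 0 by rewrite pnatr_eq0 -lt0n.
have st0 : ((s * t)%:R : F) != 0 by rewrite pnatr_eq0 muln_eq0 negb_or -!lt0n s_gt0.
have spt0 : ((s + t)%:R : F) != 0 by rewrite pnatr_eq0 addn_eq0 negb_and -!lt0n s_gt0.
pose P := X - t%:R^-1 *: Y.
have PP : P *m P = (s + t)%:R *: P.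
  rewrite /P mulmxBl !mulmxBr -!scalemxAl -!scalemxAr XX XY YX YY !scalerA.
  rewrite scalerBr scalerA -!addrA; congr (_ + _).
  rewrite -[Y in - Y + _]scale1r -scalerBl -!scaleNr -!scalerDl.
  by congr (_ *: _); rewrite natrM natrD; field.
have trY := mxtrace_scaled_idem st0 YY.
have trP := mxtrace_scaled_idem spt0 PP.
exists (\rank Y), (\rank P); split; last by rewrite trY -natrM.
have -> : X = P + t%:R^-1 *: Y by rewrite /P subrK.
rewrite mxtraceD mxtraceZ trY trP natrD !natrM.
by field.
Qed.

Lemma mulmx_sum_family (I : finType) (P : pred I) (a b : I -> 'M[F]_n) (s t : nat) :
  (0 < s)%N ->
  (forall i, P i -> a i *m b i = s%:R *: b i) ->
  (forall i, P i -> b i *m a i = s%:R *: b i) ->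
  (forall i, P i -> b i *m b i = (s * t)%:R *: b i) ->
  (forall i j, P i -> P j -> i != j -> a j *m b i = 0 /\ b i *m a j = 0) ->
  [/\ (\sum_(i | P i) a i) *m (\sum_(i | P i) b i) = s%:R *: \sum_(i | P i) b i,
      (\sum_(i | P i) b i) *m (\sum_(i | P i) a i) = s%:R *: \sum_(i | P i) b i &
      (\sum_(i | P i) b i) *m (\sum_(i | P i) b i) = (s * t)%:R *: \sum_(i | P i) b i].
Proof.
move=> s_gt0 ab ba bb abij; rewrite !scaler_sumr; split.
- rewrite mulmx_sumr; apply: eq_bigr => i Pi.
  rewrite mulmx_suml (bigD1 i) //= ab // big1 ?addr0 // => j /andP[Pj ji].
  by case: (abij i j Pi Pj); rewrite // eq_sym.
- rewrite mulmx_suml; apply: eq_bigr => i Pi.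
  rewrite mulmx_sumr (bigD1 i) //= ba // big1 ?addr0 // => j /andP[Pj ji].
  by case: (abij i j Pi Pj); rewrite // eq_sym.
rewrite mulmx_suml; apply: eq_bigr => i Pi.
rewrite mulmx_sumr (bigD1 i) //= bb // big1 ?addr0 // => j /andP[Pj ji].
have s0 : (s%:R : F) != 0 by rewrite pnatr_eq0 -lt0n.
have -> : b i = s%:R^-1 *: (b i *m a i) by rewrite ba // scalerA mulVf // scale1r.
by rewrite -scalemxAl -mulmxA; case: (abij j i Pj Pi ji) => -> _; rewrite mulmx0 scaler0.
Qed.

End ScaledIdempotents.

Lemma exchange_big_mulrn (V : nmodType) (I J : finType) (P : pred I) (Q : pred J)
    (f : J -> V) (c : I -> J -> nat) :
  (\sum_(i | P i) \sum_(j | Q j) f j *+ c i j = \sum_(j | Q j) f j *+ \sum_(i | P i) c i j)%R.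
Proof. by rewrite exchange_big; apply: eq_bigr => j _; rewrite sumrMnr. Qed.

Section GroupIndicatorSums.
Local Open Scope ring_scope.
Variables (V : nmodType) (gT : finGroupType) (G : {group gT}).
Implicit Types (A : {set gT}) (f : gT -> V).

Lemma sum_indicator A f : A \subset G ->
  \sum_(g in G) f g *+ (g \in A) = \sum_(a in A) f a.
Proof.
move=> sAG; rewrite [RHS]big_mkcond [LHS]big_mkcond; apply: eq_bigr => g _.
case gA: (g \in A); last by case: (g \in G); rewrite ?mulr0n.
by rewrite (subsetP sAG g gA) mulr1n.
Qed.

Lemma sum_translate_indicator A f b : A \subset G -> b \in G ->
  \sum_(a in A) f (a * b)%g = \sum_(g in G) f g *+ ((g * b^-1)%g \in A).
Proof.
move=> sAG bG; rewrite [RHS](reindex_inj (mulIg b)) /=.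
rewrite [RHS](eq_bigl (mem G)) => [|a]; last by rewrite /= groupMr.
under [RHS]eq_bigr do rewrite mulgK.
by rewrite (sum_indicator (fun a => f (a * b)%g)).
Qed.

End GroupIndicatorSums.

Section RepresentationSums.
Local Open Scope ring_scope.
Variables (F : numFieldType) (gT : finGroupType) (G : {group gT}) (n : nat).
Variable rG : mx_representation F G n.
Implicit Types (A B : {set gT}) (H K : {group gT}).

Definition repr_sum A : 'M[F]_n := \sum_(g in A) rG g.

Lemma repr_sumM A B : A \subset G -> B \subset G ->
  repr_sum A *m repr_sum B = \sum_(a in A) \sum_(b in B) rG (a * b)%g.
Proof.
move=> sAG sBG; rewrite mulmx_suml; apply: eq_bigr => a aA.
rewrite mulmx_sumr; apply: eq_bigr => b bB.
by rewrite repr_mxM ?(subsetP sAG a aA) ?(subsetP sBG b bB).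
Qed.

Lemma repr_sum_subgroupM H K : H \subset K -> K \subset G ->
  repr_sum H *m repr_sum K = #|H|%:R *: repr_sum K /\
  repr_sum K *m repr_sum H = #|H|%:R *: repr_sum K.
Proof.
move=> sHK sKG; have sHG := subset_trans sHK sKG.
rewrite !repr_sumM // scaler_nat -(sumr_const (mem H)); split.
  apply: eq_bigr => h hH; rewrite [RHS](reindex_inj (mulgI h)) /=.
  by apply: eq_bigl => k; rewrite /= groupMl ?(subsetP sHK h hH).
rewrite exchange_big; apply: eq_bigr => h hH /=.
rewrite [RHS](reindex_inj (mulIg h)) /=.
by apply: eq_bigl => k; rewrite /= groupMr ?(subsetP sHK h hH).
Qed.

Lemma repr_sum_TIM H K : H \subset G -> K \subset G -> H :&: K = 1%g ->
  (#|H| * #|K|)%N = #|G| -> repr_sum H *m repr_sum K = repr_sum G.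
Proof.
move=> sHG sKG tiHK cardHK; rewrite repr_sumM // pair_big /=.
pose mul_pair (u : gT * gT) := (u.1 * u.2)%g.
have mul_pair_inj : {in setX H K &, injective mul_pair}.
  move=> [h k] [h' k']; rewrite !inE /mul_pair /= => /andP[hH kK] /andP[h'H k'K] e.
  have hk : (h'^-1 * h = k' * k^-1)%g by rewrite -(mulgK k h) e mulgA mulKg.
  have : (h'^-1 * h)%g \in H :&: K by rewrite inE {2}hk !groupM ?groupV.
  rewrite tiHK inE -eq_mulVg1 => /eqP eh; subst h'.
  by move/mulgI: e => ->.
have imG : mul_pair @: setX H K = G.
  apply/eqP; rewrite eqEcard card_in_imset // cardsX cardHK leqnn andbT.
  apply/subsetP => _ /imsetP[[h k] /setXP[hH kK] ->].
  by rewrite groupM ?(subsetP sHG h hH) ?(subsetP sKG k kK).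
rewrite /repr_sum (eq_bigl (mem (mul_pair @: setX H K))) => [|g]; last by rewrite imG.
by rewrite big_imset //=; apply: eq_bigl => u; rewrite inE.
Qed.

Lemma repr_sum_eq0 : \sum_(g in G) \tr (rG g) = 0 -> repr_sum G = 0.
Proof.
move=> trG0; have [GG _] := repr_sum_subgroupM (subxx G) (subxx G).
have cardG0 : (#|G|%:R : F) != 0 by rewrite pnatr_eq0 -lt0n cardG_gt0.
have := mxtrace_scaled_idem cardG0 GG.
rewrite /repr_sum raddf_sum trG0 => /esym/eqP.
by rewrite mulf_eq0 (negPf cardG0) pnatr_eq0 mxrank_eq0 => /eqP.
Qed.

End RepresentationSums.


Section GeneralizedQuadrangle.
Variables (T : finType) (L : {set {set T}}) (s t : nat).
Hypothesis hGQ : GQ L s t.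
Local Notation col := (collinear L).
Implicit Types (l m : {set T}) (u v w x z : T).

Lemma GQ_s_gt0 : 0 < s. Proof. by case: hGQ. Qed.
Lemma GQ_t_gt0 : 0 < t. Proof. by case: hGQ. Qed.
Lemma GQ_card_line l : l \in L -> #|l| = s.+1.
Proof. by case: hGQ => _ _ + _ _; apply. Qed.
Lemma GQ_card_pencil x : #|[set l in L | x \in l]| = t.+1.
Proof. by case: hGQ. Qed.
Lemma GQ_card_proj x l : l \in L -> x \notin l -> #|[set z in l | col x z]| = 1.
Proof. by case: hGQ => _ _ _ _; apply. Qed.

Lemma collinearP x w :
  reflect (exists l, [/\ l \in L, x \in l & w \in l]) (col x w).
Proof.
by apply: (iffP existsP) => [[l /and3P[]] | [l [Ll xl wl]]]; exists l => //; rewrite Ll xl wl.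
Qed.

Lemma collinear_line l x w : l \in L -> x \in l -> w \in l -> col x w.
Proof. by move=> Ll xl wl; apply/collinearP; exists l. Qed.

Lemma collinearC x w : col x w = col w x.
Proof.
by apply/idP/idP => /collinearP[l [Ll h1 h2]]; apply: (collinear_line Ll).
Qed.

Lemma line_uniq l1 l2 x w : l1 \in L -> l2 \in L -> x != w ->
  x \in l1 -> w \in l1 -> x \in l2 -> w \in l2 -> l1 = l2.
Proof.
move=> L1 L2 xw x1 w1 x2 w2; apply/eqP; apply: contraT => l12.
have /subsetPn[u u2 u1] : ~~ (l2 \subset l1).
  apply: contra l12 => sub; rewrite eq_sym eqEcard sub.
  by rewrite (GQ_card_line L1) (GQ_card_line L2) ltnSn.
have : 1 < #|[set z in l1 | col u z]|.
  apply/card_gt1P; exists x, w.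
  by rewrite !inE x1 w1 xw (collinear_line L2 u2 x2) (collinear_line L2 u2 w2).
by rewrite GQ_card_proj.
Qed.

Lemma proj_set x l : l \in L -> x \notin l ->
  exists w, [set z in l | col x z] = [set w].
Proof. by move=> Ll xl; apply/cards1P; rewrite GQ_card_proj. Qed.

Lemma proj_uniq x l z1 z2 : l \in L -> x \notin l -> z1 \in l -> z2 \in l ->
  col x z1 -> col x z2 -> z1 = z2.
Proof.
move=> Ll xl z1l z2l c1 c2; have [w projE] := proj_set Ll xl.
have : z1 \in [set z in l | col x z] by rewrite inE z1l c1.
have : z2 \in [set z in l | col x z] by rewrite inE z2l c2.
by rewrite projE !inE => /eqP -> /eqP ->.
Qed.

Lemma proj_exists x l : l \in L -> x \notin l -> exists2 w, w \in l & col x w.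
Proof.
move=> Ll xl; have [w projE] := proj_set Ll xl.
have : w \in [set z in l | col x z] by rewrite projE set11.
by rewrite inE => /andP[]; exists w.
Qed.

Lemma card_line_noncollinear x l : l \in L -> x \notin l ->
  #|[set u in l | ~~ col x u]| = s.
Proof.
move=> Ll xl; have := cardsID [set u | col x u] l.
have -> : l :&: [set u | col x u] = [set z in l | col x z].
  by apply/setP => u; rewrite !inE.
have -> : l :\: [set u | col x u] = [set u in l | ~~ col x u].
  by apply/setP => u; rewrite !inE andbC.
by rewrite (GQ_card_proj Ll xl) (GQ_card_line Ll) add1n => -[].
Qed.

Definition nlines u v := \sum_(l in L | u \in l) (v \in l : nat).

Lemma nlinesE u v : nlines u v = if u == v then t.+1 else col u v.
Proof.
case: eqP => [<- | /eqP uv].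
  rewrite /nlines (eq_bigr (fun _ => 1%N)) => [|l /andP[_ ->] //].
  rewrite sum1dep_card -(GQ_card_pencil u); apply: eq_card => l; by rewrite !inE.
case: (boolP (col u v)) => [/collinearP[l0 [L0 u0 v0]] | ncol].
  rewrite /nlines (bigD1 l0) /=; last by rewrite L0 u0.
  rewrite v0 big1 // => l /andP[/andP[Ll ul] ll0]; apply/eqP; rewrite eqb0.
  by apply: contra ll0 => vl; apply/eqP; apply: (line_uniq Ll L0 uv).
rewrite /nlines big1 // => l /andP[Ll ul]; apply/eqP; rewrite eqb0.
by apply: contra ncol => vl; apply: (collinear_line Ll).
Qed.

Lemma sum_nlines_line l x : l \in L ->
  \sum_(u in l) nlines u x = (s + t) * (x \in l) + 1.
Proof.
move=> Ll; under eq_bigr => u _ do rewrite nlinesE.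
case: (boolP (x \in l)) => xl.
  rewrite (bigD1 x) //= eqxx muln1.
  rewrite (eq_bigr (fun _ => 1%N)) => [|u /andP[ul /negPf ->]]; last first.
    by rewrite (collinear_line Ll ul xl).
  rewrite sum1dep_card.
  have -> : #|[set u | (u \in l) && (u != x)]| = #|l :\ x|.
    by apply: eq_card => u; rewrite !inE andbC.
  have := cardsD1 x l; rewrite xl (GQ_card_line Ll); lia.
rewrite muln0 add0n -(GQ_card_proj Ll xl) -sum1dep_card big_mkcondr /=.
apply: eq_bigr => u ul; have -> : (u == x) = false by apply: contraNF xl => /eqP <-.
by rewrite collinearC.
Qed.

(* Each of the t lines through z other than zp carries s points not collinear with p. *)
Lemma card_noncollinear_nbhd p z : col p z -> z != p ->
  #|[set x | ~~ col p x & col x z]| = s * t.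
Proof.
move=> cpz zp.
have lines_through_z : \sum_(l in L | z \in l) (s * (p \notin l)) = s * t.
  have := nlinesE z z; have := nlinesE z p.
  rewrite eqxx (negPf zp) collinearC cpz /nlines /= => through_p through_z.
  have : \sum_(l in L | z \in l) ((p \in l) + (p \notin l))%N = t.+1.
    by rewrite -through_z; apply: eq_bigr => l /andP[_ ->]; case: (p \in l).
  by rewrite big_split /= through_p add1n -big_distrr /= => -[->].
rewrite -lines_through_z -sum1dep_card.
transitivity (\sum_(x | ~~ col p x) nlines z x).
  rewrite big_mkcondr /=; apply: eq_bigr => x ncx.
  have zx : z != x by apply: contraNneq _ ncx => <-.
  by rewrite nlinesE (negPf zx) collinearC.
rewrite /nlines exchange_big /=; apply: eq_bigr => l /andP[Ll zl].
case: (boolP (p \in l)) => pl /=.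
  rewrite muln0 big1 // => x ncx; apply/eqP; rewrite eqb0; apply: contra ncx.
  exact: collinear_line Ll pl.
rewrite muln1 -(card_line_noncollinear Ll pl) -sum1dep_card big_mkcond [RHS]big_mkcond /=.
by apply: eq_bigr => x _; case: (x \in l); case: (col p x).
Qed.

End GeneralizedQuadrangle.

Section Stabilizers.
Variables (T : finType) (G : {group {perm T}}).
Local Notation image g l := ((fun x => g x) @: l).

Lemma image_perm1 (l : {set T}) : image (1%g : {perm T}) l = l.
Proof. by rewrite (eq_imset _ (@perm1 T)) imset_id. Qed.

Lemma stab_line_group_set (M : {set T}) : group_set (stab_line G M).
Proof.
apply/andP; split; first by rewrite inE group1 image_perm1 eqxx.
apply/subsetP => _ /mulsgP[a b aA bA ->].
move: aA bA; rewrite !inE => /andP[aG /eqP aM] /andP[bG /eqP bM].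
rewrite groupM //=; apply/eqP.
transitivity (image b (image a M)); last by rewrite aM bM.
by rewrite -imset_comp; apply: eq_imset => x; rewrite /= permM.
Qed.
Canonical stab_line_group M := Group (stab_line_group_set M).

Lemma stab_pt_group_set (z : T) : group_set (stab_pt G z).
Proof.
apply/andP; split; first by rewrite inE group1 perm1 eqxx.
apply/subsetP => _ /mulsgP[a b aA bA ->].
move: aA bA; rewrite !inE => /andP[aG /eqP az] /andP[bG /eqP bz].
by rewrite groupM //= permM az bz.
Qed.
Canonical stab_pt_group z := Group (stab_pt_group_set z).

Lemma stab_line_sub (M : {set T}) : stab_line G M \subset G.
Proof. by apply/subsetP => g; rewrite inE => /andP[]. Qed.

Lemma stab_pt_sub (z : T) : stab_pt G z \subset G.
Proof. by apply/subsetP => g; rewrite inE => /andP[]. Qed.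

End Stabilizers.

Section ElationQuadrangle.
Variables (T : finType) (L : {set {set T}}) (s t : nat) (p : T).
Variable G : {group {perm T}}.
Hypotheses (hGQ : GQ L s t) (hE : EGQ L p G).
Local Notation col := (collinear L).
Local Notation image g l := ((fun x => g x) @: l).
Implicit Types (g h : {perm T}) (l M N : {set T}) (u w x z : T).

Lemma elation_line g l : g \in G -> l \in L -> image g l \in L.
Proof.
move=> gG Ll; case/orP: (hE.1 g gG) => [/eqP-> | /and3P[aut _ _]].
  by rewrite image_perm1.
by move/forallP: aut => /(_ l)/eqP <-.
Qed.

Lemma elation_fix_line g l : g \in G -> l \in L -> p \in l -> image g l = l.
Proof.
move=> gG Ll pl; case/orP: (hE.1 g gG) => [/eqP-> | /and3P[_ fixl _]].
  by rewrite image_perm1.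
by move/forall_inP: fixl => /(_ l Ll); rewrite pl => /eqP.
Qed.

Lemma elation_collinear g x w : g \in G -> col (g x) (g w) = col x w.
Proof.
suff imcol g' x' w' : g' \in G -> col x' w' -> col (g' x') (g' w').
  move=> gG; apply/idP/idP; last exact: imcol.
  by move/(imcol g^-1%g _ _ (groupVr gG)); rewrite !permK.
move=> gG /collinearP[l [Ll xl wl]].
by apply: (collinear_line (elation_line gG Ll)); apply: imset_f.
Qed.

Lemma elation_fix_base g : g \in G -> g p = p.
Proof.
move=> gG; have : 1 < #|[set l in L | p \in l]|.
  by rewrite (GQ_card_pencil hGQ) ltnS (GQ_t_gt0 hGQ).
case/card_gt1P => l1 [l2 []]; rewrite !inE => /andP[L1 p1] /andP[L2 p2] l12.
apply/eqP; apply: contraT => gpp.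
have g1 : g p \in l1 by rewrite -(elation_fix_line gG L1 p1); apply: imset_f.
have g2 : g p \in l2 by rewrite -(elation_fix_line gG L2 p2); apply: imset_f.
by rewrite (line_uniq hGQ L1 L2 gpp g1 p1 g2 p2) eqxx in l12.
Qed.

Lemma elation_collinear_base g x : g \in G -> col p (g x) = col p x.
Proof. by move=> gG; rewrite -{1}(elation_fix_base gG) elation_collinear. Qed.

Lemma elation_nlines g u w : g \in G -> nlines L (g u) (g w) = nlines L u w.
Proof. by move=> gG; rewrite !(nlinesE hGQ) (inj_eq perm_inj) elation_collinear. Qed.

(* g fixes the line pz, and z is the only point of that line collinear with x *)
Lemma elation_fix_point g z x : g \in G -> col p z -> ~~ col p x ->
  col x z -> col x (g z) -> g z = z.
Proof.
move=> gG cpz ncx cxz cxgz; have /collinearP[l [Ll pl zl]] := cpz.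
have gzl : g z \in l by rewrite -(elation_fix_line gG Ll pl); apply: imset_f.
have xl : x \notin l by apply: contra ncx; apply: collinear_line Ll pl.
exact: (proj_uniq hGQ Ll xl gzl zl cxgz cxz).
Qed.

Variable y : T.
Hypothesis hy : ~~ col p y.
Local Notation zM M := (zpt L p M).

Lemma regular_inj g h : g \in G -> h \in G -> g y = h y -> g = h.
Proof.
move=> gG hG gh; have ngy : ~~ col p (g y) by rewrite elation_collinear_base.
have [g0 [_ g0_uniq]] := hE.2 y (g y) hy ngy.
by rewrite -(g0_uniq g) ?(g0_uniq h).
Qed.

Lemma regular_transitive x : ~~ col p x -> exists2 g, g \in G & g y = x.
Proof. by move=> ncx; have [g [[gG gy] _]] := hE.2 y x hy ncx; exists g. Qed.

Lemma base_notin_line M : M \in L -> y \in M -> p \notin M.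
Proof. by move=> LM yM; apply: contra hy => pM; apply: collinear_line LM pM yM. Qed.

Lemma zpt_spec M : M \in L -> y \in M -> [/\ zM M \in M, col p (zM M) & zM M != p].
Proof.
move=> LM yM; rewrite /zpt; case: pickP => [z /andP[Mz cz] | none] /=.
  by split => //; apply: contraNneq (base_notin_line LM yM) => <-.
have [w wM cw] := proj_exists hGQ LM (base_notin_line LM yM).
by have := none w; rewrite wM cw.
Qed.

Lemma zpt_uniq M w : M \in L -> y \in M -> w \in M -> col p w -> w = zM M.
Proof.
move=> LM yM wM cw; have [Mz cz _] := zpt_spec LM yM.
exact: (proj_uniq hGQ LM (base_notin_line LM yM) wM Mz cw cz).
Qed.

Lemma noncollinear_line M : M \in L -> y \in M -> [set u in M | ~~ col p u] = M :\ zM M.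
Proof.
move=> LM yM; apply/setP => u; rewrite !inE andbC [RHS]andbC.
case uM: (u \in M); rewrite ?andbT ?andbF //.
apply/idP/idP => [ncu | uz]; first by apply: contraNneq _ ncu => ->; case: (zpt_spec LM yM).
by apply: contra uz => cu; apply/eqP; apply: zpt_uniq.
Qed.

Lemma mem_stab_line M g : M \in L -> y \in M -> g \in G ->
  (g \in stab_line G M) = (g y \in M).
Proof.
move=> LM yM gG; rewrite inE gG /=; apply/eqP/idP => [<- | gyM]; first exact: imset_f.
have [Mz cz zp] := zpt_spec LM yM.
have ncgy : ~~ col p (g y) by rewrite elation_collinear_base.
have gz : g (zM M) = zM M.
  apply: (elation_fix_point gG cz ncgy); first exact: collinear_line LM gyM Mz.
  by rewrite elation_collinear //; apply: collinear_line LM yM Mz.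
have gyz : g y != zM M by apply: contraNneq ncgy => ->.
apply: (line_uniq hGQ (elation_line gG LM) LM gyz) => //; first exact: imset_f.
by rewrite -gz; apply: imset_f.
Qed.

Lemma mem_stab_pt M g : M \in L -> y \in M -> g \in G ->
  (g \in stab_pt G (zM M)) = col (g y) (zM M).
Proof.
move=> LM yM gG; rewrite inE gG /=; have [Mz cz zp] := zpt_spec LM yM.
have cyz : col y (zM M) by apply: collinear_line LM yM Mz.
apply/eqP/idP => [gz | cgyz]; first by rewrite -[in X in col _ X]gz elation_collinear.
have ncgy : ~~ col p (g y) by rewrite elation_collinear_base.
by apply: (elation_fix_point gG cz ncgy cgyz); rewrite elation_collinear.
Qed.

Lemma stab_line_sub_pt M : M \in L -> y \in M -> stab_line G M \subset stab_pt G (zM M).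
Proof.
move=> LM yM; apply/subsetP => g gA; have gG := subsetP (stab_line_sub G M) g gA.
rewrite mem_stab_pt // ; rewrite mem_stab_line // in gA.
by have [Mz _ _] := zpt_spec LM yM; apply: collinear_line LM gA Mz.
Qed.

Lemma stab_pt_line_TI M N : M \in L -> y \in M -> N \in L -> y \in N -> M != N ->
  stab_pt G (zM M) :&: stab_line G N = 1%g.
Proof.
move=> LM yM LN yN MN; apply/trivgP/subsetP => g /setIP[gz gN].
have gG := subsetP (stab_pt_sub G _) g gz.
rewrite mem_stab_pt // in gz; rewrite mem_stab_line // in gN.
have [Mz cz zp] := zpt_spec LM yM.
have zN : zM M \notin N.
  apply: contra MN => zN; apply/eqP; apply: (line_uniq hGQ LM LN _ yM Mz yN zN).
  by apply: contraNneq hy => ->.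
have gyy : g y = y.
  apply: (proj_uniq hGQ LN zN gN yN); rewrite collinearC //.
  exact: collinear_line LM yM Mz.
by rewrite inE; apply/eqP; apply: (regular_inj gG (group1 G)); rewrite perm1.
Qed.

Lemma stab_line_orbit M : M \in L -> y \in M ->
  [set g y | g : {perm T} in stab_line G M] = [set u in M | ~~ col p u].
Proof.
move=> LM yM; apply/setP => u; rewrite inE; apply/imsetP/andP.
  case=> g gA ->; have gG := subsetP (stab_line_sub G M) g gA.
  by rewrite -mem_stab_line // elation_collinear_base.
case=> uM ncu; have [g gG gy] := regular_transitive ncu.
by exists g => //; rewrite mem_stab_line // gy.
Qed.

Lemma stab_pt_orbit M : M \in L -> y \in M ->
  [set g y | g : {perm T} in stab_pt G (zM M)] = [set u | ~~ col p u & col u (zM M)].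
Proof.
move=> LM yM; apply/setP => u; rewrite inE; apply/imsetP/andP.
  case=> g gA ->; have gG := subsetP (stab_pt_sub G _) g gA.
  by rewrite -mem_stab_pt // elation_collinear_base.
case=> ncu cu; have [g gG gy] := regular_transitive ncu.
by exists g => //; rewrite mem_stab_pt // gy.
Qed.

Lemma orbit_map_inj (A : {set {perm T}}) : A \subset G -> {in A &, injective (fun g => g y)}.
Proof. by move=> sAG g h gA hA; apply: regular_inj; apply: (subsetP sAG). Qed.

Lemma card_stab_line M : M \in L -> y \in M -> #|stab_line G M| = s.
Proof.
move=> LM yM; rewrite -(card_in_imset (orbit_map_inj (stab_line_sub G M))).
by rewrite stab_line_orbit // (card_line_noncollinear hGQ LM (base_notin_line LM yM)).
Qed.

Lemma card_stab_pt M : M \in L -> y \in M -> #|stab_pt G (zM M)| = s * t.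
Proof.
move=> LM yM; rewrite -(card_in_imset (orbit_map_inj (stab_pt_sub G _))).
by have [_ cz zp] := zpt_spec LM yM; rewrite stab_pt_orbit // (card_noncollinear_nbhd hGQ).
Qed.

Lemma sum_pencil_const (V : nmodType) (c : V) : (\sum_(N in L | y \in N) c = c *+ t.+1)%R.
Proof.
by rewrite -(GQ_card_pencil hGQ y) -sumr_const; apply: eq_bigl => N; rewrite inE.
Qed.

(* The coefficient of g in X^2 + Y, one line N at a time: b y runs over the points
   of N other than z_N as b runs over A_N, and the inner count is nlines (b y) (g y). *)
Lemma count_line N g : N \in L -> y \in N -> g \in G ->
  \sum_(b in stab_line G N) \sum_(M in L | y \in M) ((g * b^-1)%g \in stab_line G M : nat)
  + (g \in stab_pt G (zM N)) = (s + t) * (g \in stab_line G N) + 1.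
Proof.
move=> LN yN gG; have [Nz cz zp] := zpt_spec LN yN.
have ncgy : ~~ col p (g y) by rewrite elation_collinear_base.
rewrite mem_stab_pt // mem_stab_line // -(sum_nlines_line hGQ _ LN) (bigD1 (zM N)) //=.
rewrite addnC; congr (_ + _).
  have zgy : zM N != g y by apply: contraNneq _ ncgy => <-.
  by rewrite (nlinesE hGQ) (negPf zgy) collinearC.
rewrite (eq_bigl (mem [set u in N | ~~ col p u])) => [|u]; last first.
  by rewrite noncollinear_line // !inE andbC.
rewrite -stab_line_orbit // big_imset /=; last exact: orbit_map_inj (stab_line_sub G N).
apply: eq_bigr => b bN; have bG := subsetP (stab_line_sub G N) b bN.
have gbG : (g * b^-1)%g \in G by rewrite groupM ?groupV.
transitivity (nlines L y ((g * b^-1)%g y)).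
  by apply: eq_bigr => M /andP[LM yM]; rewrite mem_stab_line.
by rewrite permM -(elation_nlines _ _ bG) permKV.
Qed.

(* The group-ring identity X^2 + Y = (s + t) X + (t + 1) G, pushed through f. *)
Lemma pencil_stabilizer_identity (V : nmodType) (f : {perm T} -> V) :
  (\sum_(M in L | y \in M) \sum_(N in L | y \in N)
     \sum_(a in stab_line G M) \sum_(b in stab_line G N) f (a * b)%g
  + \sum_(N in L | y \in N) \sum_(a in stab_pt G (zM N)) f a
  = (\sum_(N in L | y \in N) \sum_(a in stab_line G N) f a) *+ (s + t)
    + (\sum_(g in G) f g) *+ t.+1)%R.
Proof.
have sum_pencil (B : {set T} -> {set {perm T}}) : (forall N, B N \subset G) ->
    (\sum_(N in L | y \in N) \sum_(a in B N) f a
    = \sum_(g in G) f g *+ (\sum_(N in L | y \in N) (g \in B N : nat)))%R.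
  by move=> sBG; rewrite -exchange_big_mulrn; apply: eq_bigr => N _; rewrite sum_indicator.
have square : (\sum_(M in L | y \in M) \sum_(N in L | y \in N)
     \sum_(a in stab_line G M) \sum_(b in stab_line G N) f (a * b)%g
  = \sum_(g in G) f g *+ (\sum_(N in L | y \in N) \sum_(b in stab_line G N)
       \sum_(M in L | y \in M) ((g * b^-1)%g \in stab_line G M : nat)))%R.
  rewrite exchange_big /= -exchange_big_mulrn; apply: eq_bigr => N _.
  rewrite -exchange_big_mulrn; under eq_bigr => M _ do rewrite exchange_big.
  rewrite exchange_big /=; apply: eq_bigr => b bN.
  rewrite -exchange_big_mulrn; apply: eq_bigr => M _.
  by apply: sum_translate_indicator; rewrite ?stab_line_sub ?(subsetP (stab_line_sub G N)).
rewrite square (sum_pencil _ (fun N => stab_pt_sub G (zM N))) (sum_pencil _ (stab_line_sub G)).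
rewrite -big_split -!sumrMnl -big_split /=; apply: eq_bigr => g gG.
rewrite -mulrnDr -mulrnA -mulrnDr; congr (_ *+ _)%R.
rewrite -big_split (eq_bigr (fun N => (s + t) * (g \in stab_line G N) + 1)) /=.
  by rewrite big_split /= -big_distrr sum_pencil_const /= mulnC; lia.
by move=> N /andP[LN yN]; apply: count_line.
Qed.

Lemma card_elation_group : #|G| = (s * s * t)%N.
Proof.
have sum_stab_line M : M \in L -> y \in M -> \sum_(a in stab_line G M) 1 = s.
  by move=> LM yM; rewrite sum1_card card_stab_line.
have XX : \sum_(M in L | y \in M) \sum_(N in L | y \in N)
    \sum_(a in stab_line G M) \sum_(b in stab_line G N) 1 = s * s * t.+1 * t.+1.
  rewrite (eq_bigr (fun _ => s * s * t.+1)) => [|M /andP[LM yM]].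
    by rewrite sum_pencil_const; lia.
  rewrite (eq_bigr (fun _ => s * s)) => [|N /andP[LN yN]].
    by rewrite sum_pencil_const; lia.
  rewrite (eq_bigr (fun _ => s)) => [|a _]; last exact: sum_stab_line.
  by rewrite sum_nat_const card_stab_line // mulnC.
have X : \sum_(N in L | y \in N) \sum_(a in stab_line G N) 1 = s * t.+1.
  rewrite (eq_bigr (fun _ => s)) => [|N /andP[]]; last exact: sum_stab_line.
  by rewrite sum_pencil_const; lia.
have Y : \sum_(N in L | y \in N) \sum_(a in stab_pt G (zM N)) 1 = s * t * t.+1.
  rewrite (eq_bigr (fun _ => s * t)) => [|N /andP[LN yN]].
    by rewrite sum_pencil_const; lia.
  by rewrite sum1_card card_stab_pt.
have := pencil_stabilizer_identity (fun _ => 1%N).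
rewrite XX X Y sum1_card.
have := GQ_s_gt0 hGQ; have := GQ_t_gt0 hGQ; nia.
Qed.

End ElationQuadrangle.

Section PencilTraces.
Local Open Scope ring_scope.
Variables (T : finType) (L : {set {set T}}) (s t : nat) (p : T).
Variables (G : {group {perm T}}) (y : T).
Hypotheses (hGQ : GQ L s t) (hE : EGQ L p G) (hy : ~~ collinear L p y).
Variables (F : numFieldType) (n : nat) (rG : mx_representation F G n).
Hypothesis trG0 : \sum_(g in G) \tr (rG g) = 0.
Local Notation rA N := (repr_sum rG (stab_line G N)).
Local Notation rAs N := (repr_sum rG (stab_pt G (zpt L p N))).
Local Notation X := (\sum_(N in L | y \in N) rA N).
Local Notation Y := (\sum_(N in L | y \in N) rAs N).

Lemma repr_stab_relations N : N \in L -> y \in N ->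
  [/\ rA N *m rA N = s%:R *: rA N, rAs N *m rAs N = (s * t)%:R *: rAs N,
      rA N *m rAs N = s%:R *: rAs N & rAs N *m rA N = s%:R *: rAs N].
Proof.
move=> LN yN; rewrite -(card_stab_pt hGQ hE hy LN yN) -(card_stab_line hGQ hE hy LN yN).
have [AAs AsA] := repr_sum_subgroupM rG (H := stab_line_group G N) (K := stab_pt_group G _)
  (stab_line_sub_pt hGQ hE hy LN yN) (stab_pt_sub G _).
split=> //.
- exact: (repr_sum_subgroupM rG (subxx (stab_line_group G N)) (stab_line_sub G N)).1.
- exact: (repr_sum_subgroupM rG (subxx (stab_pt_group G _)) (stab_pt_sub G _)).1.
Qed.

(* A_N A*_M = A*_M A_N = G for M != N, and G acts as 0 *)
Lemma repr_stab_cross M N : M \in L -> y \in M -> N \in L -> y \in N -> M != N ->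
  rA N *m rAs M = 0 /\ rAs M *m rA N = 0.
Proof.
move=> LM yM LN yN MN; have tiMN := stab_pt_line_TI hGQ hE hy LM yM LN yN MN.
have cardG : #|G| = (#|stab_pt G (zpt L p M)| * #|stab_line G N|)%N.
  by rewrite (card_elation_group hGQ hE hy) (card_stab_pt hGQ hE hy LM yM)
    (card_stab_line hGQ hE hy LN yN) mulnAC.
rewrite -(repr_sum_eq0 trG0); split.
  by apply: (repr_sum_TIM rG (H := stab_line_group G N) (K := stab_pt_group G _));
    rewrite ?stab_line_sub ?stab_pt_sub 1?setIC // mulnC.
by apply: (repr_sum_TIM rG (H := stab_pt_group G _) (K := stab_line_group G N));
  rewrite ?stab_line_sub ?stab_pt_sub.
Qed.

Lemma repr_pencil_square : X *m X = (s + t)%:R *: X - Y.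
Proof.
have := pencil_stabilizer_identity hGQ hE hy (fun g => rG g).
rewrite -[\sum_(g in G) rG g]/(repr_sum rG G) repr_sum_eq0 // mul0rn addr0.
rewrite scaler_nat => <-; rewrite addrK mulmx_suml; apply: eq_bigr => M _.
by rewrite mulmx_sumr; apply: eq_bigr => N _; rewrite repr_sumM ?stab_line_sub.
Qed.

Lemma mxtrace_pencil_sums : exists k rF rP : nat,
  [/\ \tr X = (s * k)%:R, \tr X = (s * rF + (s + t) * rP)%:R & \tr Y = (s * t * rF)%:R].
Proof.
have s_gt0 := GQ_s_gt0 hGQ; have t_gt0 := GQ_t_gt0 hGQ.
have [XY YX YY] : [/\ X *m Y = s%:R *: Y, Y *m X = s%:R *: Y & Y *m Y = (s * t)%:R *: Y].
  apply: mulmx_sum_family => // [N | N | N | M N /andP[LM yM]] /andP[LN yN];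
    by [case: (repr_stab_relations LN yN) | apply: repr_stab_cross].
have [rF [rP [trX trY]]] := mxtrace_quadratic_system s_gt0 t_gt0 XY YX YY repr_pencil_square.
exists (\sum_(N in L | y \in N) \rank (rA N))%N, rF, rP; split => //.
rewrite raddf_sum natrM natr_sum big_distrr; apply: eq_bigr => N /andP[LN yN].
have [AA _ _ _] := repr_stab_relations LN yN.
by apply: mxtrace_scaled_idem AA; rewrite pnatr_eq0 -lt0n.
Qed.

End PencilTraces.

Section CharacterSums.
Local Open Scope ring_scope.
Variables (gT : finGroupType) (G : {group gT}) (i : Iirr G).

Lemma sum_cfun_irr_mxtrace (A : {set gT}) : A \subset G ->
  \sum_(a in A) 'chi_i a = \tr (repr_sum 'Chi_i A).
Proof.
move=> sAG; rewrite raddf_sum; apply: eq_bigr => a aA.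
by rewrite -irrRepr cfunE (subsetP sAG a aA) mulr1n.
Qed.

Lemma sum_mxtrace_irr_repr_eq0 : i != 0 -> \sum_(g in G) \tr ('Chi_i g) = 0.
Proof.
move=> i0; have : '['chi_i, 1] = 0 :> algC by rewrite -irr0 cfdot_irr (negPf i0).
rewrite cfdotE => /eqP; rewrite mulf_eq0 invr_eq0 pnatr_eq0 eqn0Ngt cardG_gt0 /= => /eqP.
by apply: etrans; apply: eq_bigr => g gG; rewrite cfun1E gG conjC1 mulr1 -irrRepr cfunE gG mulr1n.
Qed.

End CharacterSums.

Section FourGonalCharacterSums.
Local Open Scope ring_scope.
Variables (T : finType) (L : {set {set T}}) (p y : T) (G : {group {perm T}}) (i : Iirr G).
Local Notation X := (\sum_(N in L | y \in N) repr_sum 'Chi_i (stab_line G N)).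
Local Notation Y := (\sum_(N in L | y \in N) repr_sum 'Chi_i (stab_pt G (zpt L p N))).

Lemma sum_chi_stab_line :
  \sum_(N in L | y \in N) \sum_(a in stab_line G N) 'chi_i a = \tr X.
Proof.
by rewrite raddf_sum; apply: eq_bigr => N _; rewrite sum_cfun_irr_mxtrace ?stab_line_sub.
Qed.

Lemma sum_chi_stab_pt :
  \sum_(N in L | y \in N) \sum_(a in stab_pt G (zpt L p N)) 'chi_i a = \tr Y.
Proof.
by rewrite raddf_sum; apply: eq_bigr => N _; rewrite sum_cfun_irr_mxtrace ?stab_pt_sub.
Qed.

Lemma chi_S_mxtrace s : chi_S L s p y 'chi_i = s%:R * \tr X + \tr Y.
Proof. by rewrite /chi_S big_split /= -mulr_sumr sum_chi_stab_line sum_chi_stab_pt. Qed.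

Lemma chi_T_mxtrace t : chi_T L t p y 'chi_i = t%:R * \tr X - \tr Y.
Proof. by rewrite /chi_T sumrB -mulr_sumr sum_chi_stab_line sum_chi_stab_pt. Qed.

End FourGonalCharacterSums.

Lemma lcmn_dvd_of_dvd_sum s t a b : s %| s * a + (s + t) * b -> lcmn s t %| t * b.
Proof.
have s_dvd_head : s %| s * a + s * b by rewrite -mulnDr dvdn_mulr.
by rewrite mulnDl addnA dvdn_addr // => s_dvd; rewrite dvdn_lcm s_dvd dvdn_mulr.
Qed.

Local Open Scope ring_scope.

Theorem proposition2p6 (T : finType) (L : {set {set T}}) (s t : nat) (p : T)
  (G : {group {perm T}}) (y : T) (i : Iirr G) :
  GQ L s t -> EGQ L p G -> ~~ collinear L p y ->
  ~~ ('chi[G]_i \is a linear_char) ->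
  (exists w : nat, chi_S L s p y 'chi[G]_i = (s * (s + t) * w)%:R) /\
  (exists z : nat, chi_T L t p y 'chi[G]_i = ((s + t) * s * t %/ gcdn s t * z)%:R).
Proof.
move=> hGQ hE hy nonlinear.
have i0 : i != 0 by apply: contra nonlinear => /eqP ->; rewrite irr0 cfun1_lin_char.
have [k [rF [rP [trXk trX trY]]]] :=
  mxtrace_pencil_sums hGQ hE hy (sum_mxtrace_irr_repr_eq0 i0).
rewrite chi_S_mxtrace chi_T_mxtrace trX trY; split.
  by exists (rF + rP)%N; rewrite -!natrM -natrD; congr _%:R; ring.
have sk : (s * k = s * rF + (s + t) * rP)%N.
  by apply/eqP; rewrite -(eqr_nat algC) -trXk trX.
have /dvdnP[z tz] : (lcmn s t %| t * rP)%N.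
  by apply: (lcmn_dvd_of_dvd_sum (a := rF)); rewrite -sk dvdn_mulr.
exists z; rewrite -[((s + t) * s * t)%N]mulnA -muln_divA ?dvdn_mull ?dvdn_gcdr // -/(lcmn s t).
by rewrite -[(_ * lcmn s t * z)%N]mulnA [(lcmn s t * z)%N]mulnC -tz !natrM !natrD; ring.
Qed.
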